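(* Let $\mu,h\ge2$ be integers. Put $X=\{0,1\}$, $n=h(h-1)\mu+1$, $A^*=\{x\in\mathbb{Z}_{\ge0}: x\bmod n\in\{\mu,h\mu\}\}$ and $A=A^*\cup X$. Then $\mu(A,X)=\mu$, $A^*=A\setminus X$ is an asymptotic basis with $G(A\setminus X)=h(h-1)\mu$, and $A$ is an asymptotic basis with $G(A)\le 2h+\mu-4$.
   Context: A set $A\subseteq\mathbb{Z}$ with $|A\cap\mathbb{Z}_{<0}|<\infty$ is an asymptotic basis if for some positive integer $h$ the $h$-fold sumset $hA=\{a_1+\dots+a_h: a_i\in A\}$ contains all but finitely many non-negative integers; the least such $h$ is the order $G(A)$. For a finite set $Y$ of integers, $\mathrm{diam}(Y)=\max Y-\min Y$, and for $X\subseteq A$ finite, $\mu(A,X)=\min_{y\in A\setminus X}\mathrm{diam}(X\cup\{y\})$. *)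

From Stdlib Require Import ZArith List.
Import ListNotations.
Open Scope Z_scope.

Fixpoint sumset (A : Z -> Prop) (h : nat) : Z -> Prop :=
  match h with
  | O => fun x => x = 0
  | S k => fun x => exists a b, A a /\ sumset A k b /\ x = a + b
  end.

Definition finitely_many_negatives (A : Z -> Prop) : Prop :=
  exists l : list Z, forall a, A a -> a < 0 -> In a l.

Definition basis_of_order (A : Z -> Prop) (h : nat) : Prop :=
  (exists N : Z, forall x, N <= x -> sumset A h x).

Definition asymptotic_basis (A : Z -> Prop) : Prop :=
  finitely_many_negatives A /\ exists h : nat, (1 <= h)%nat /\ basis_of_order A h.

Definition order_eq (A : Z -> Prop) (g : nat) : Prop :=
  asymptotic_basis A /\ (1 <= g)%nat /\ basis_of_order A g /\
  forall h : nat, (1 <= h)%nat -> (h < g)%nat -> ~ basis_of_order A h.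

Definition order_le (A : Z -> Prop) (m : nat) : Prop :=
  asymptotic_basis A /\ exists g : nat, (1 <= g)%nat /\ (g <= m)%nat /\ order_eq A g.

(* diam of a finite nonempty set, given as list x :: l *)
Definition diam (x : Z) (l : list Z) : Z :=
  fold_right Z.max x l - fold_right Z.min x l.

Definition mu_eq (A : Z -> Prop) (X : list Z) (m : Z) : Prop :=
  (exists y, A y /\ ~ In y X /\ diam y X = m) /\
  (forall y, A y -> ~ In y X -> m <= diam y X).

Definition setminus (A : Z -> Prop) (X : list Z) : Z -> Prop :=
  fun x => A x /\ ~ In x X.

From Stdlib Require Import ZArith List Lia Classical FunctionalExtensionality PropExtensionality Wf_nat.
Import ListNotations.
Open Scope Z_scope.

(* Put g = h(h-1)mu, so that n = g + 1 and
   h * ((h-1)mu) = g = -1 (mod n): the element (h-1)mu is invertible modulo n.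
   - Every element of k A* is, modulo n, of the form mu(k + j(h-1)) with 0 <= j <= k.
     If k < g, the residue mu(k - (h-1)) is never attained (it would force
     n | j + 1 <= g), so A* is not a basis of order k.
   - Every large x is a sum of g elements of A*: choose J in [0, g] with
     J(h-1)mu = x - g mu (mod n) (J is h(g mu - x) mod n) and write
     x = (g - J) mu + J (h mu) + n Q, absorbing n Q into one summand.
   - For A = A* u {0,1}, write x mod n = c + mu(i + h j) with c < mu, i < h; the
     c units are supplied by 1 in A, and at most 2h + mu - 4 summands are needed.
   - Since the elements of A* are >= mu >= 2, mu(A, {0,1}) = mu and A \ X = A*. *)

Lemma sumset_add (A : Z -> Prop) (a b : nat) (x y : Z) :
  sumset A a x -> sumset A b y -> sumset A (a + b) (x + y).
Proof.
  revert x; induction a as [|a IH]; simpl; intros x Hx Hy.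
  - subst x; exact Hy.
  - destruct Hx as [e [x' [He [Hx' ->]]]].
    exists e, (x' + y); split; [exact He|]; split; [now apply IH | ring].
Qed.

Lemma sumset_repeat (A : Z -> Prop) (k : nat) (e : Z) :
  A e -> sumset A k (Z.of_nat k * e).
Proof.
  intros He; induction k as [|k IH]; [reflexivity|].
  rewrite Nat2Z.inj_succ; simpl.
  exists e, (Z.of_nat k * e); split; [exact He|]; split; [exact IH | ring].
Qed.

Lemma sumset_mono (P Q : Z -> Prop) (k : nat) (x : Z) :
  (forall y, P y -> Q y) -> sumset P k x -> sumset Q k x.
Proof.
  intros HPQ; revert x; induction k as [|k IH]; simpl; intros x Hx; [exact Hx|].
  destruct Hx as [a [b [Ha [Hb ->]]]]; exists a, b; auto.
Qed.

Lemma sumset_shift (A : Z -> Prop) (k : nat) (d x : Z) :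
  (forall y, A y -> A (y + d)) -> sumset A (S k) x -> sumset A (S k) (x + d).
Proof.
  intros Hd [a [b [Ha [Hb ->]]]].
  exists (a + d), b; split; [now apply Hd|]; split; [exact Hb | ring].
Qed.

Lemma sumset_pad (A : Z -> Prop) (c : Z) (k m : nat) (y : Z) :
  A 0 -> A 1 -> 0 <= c -> (Z.to_nat c + k <= m)%nat ->
  sumset A k y -> sumset A m (c + y).
Proof.
  intros H0 H1 Hc Hm Hy.
  replace m with ((Z.to_nat c + k) + (m - (Z.to_nat c + k)))%nat by lia.
  replace (c + y) with ((Z.of_nat (Z.to_nat c) * 1 + y)
                        + Z.of_nat (m - (Z.to_nat c + k)) * 0) by lia.
  apply sumset_add; [apply sumset_add|]; auto using sumset_repeat.
Qed.

Lemma nonneg_finitely_many_negatives (P : Z -> Prop) :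
  (forall x, P x -> 0 <= x) -> finitely_many_negatives P.
Proof. intros HP; exists []; intros a Ha Hneg; specialize (HP a Ha); lia. Qed.

Lemma order_le_of_basis (P : Z -> Prop) (m : nat) :
  finitely_many_negatives P -> (1 <= m)%nat -> basis_of_order P m -> order_le P m.
Proof.
  intros Hneg Hm Hb.
  assert (Hleast : exists g, (1 <= g <= m)%nat /\ order_eq P g).
  { induction m as [m IH] using lt_wf_ind.
    destruct (classic (exists k, (1 <= k < m)%nat /\ basis_of_order P k))
      as [[k [Hk Hbk]] | Hnone].
    - destruct (IH k ltac:(lia) ltac:(lia) Hbk) as [g [Hg Hord]].
      exists g; split; [lia | exact Hord].
    - exists m; split; [lia|].
      repeat split; eauto.
      intros k Hk1 Hkm Hbk; apply Hnone; eauto. }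
  destruct Hleast as [g [Hg Hord]].
  split; [split; eauto | exists g; split; [lia | split; [lia | exact Hord]]].
Qed.

Section Construction.
Variables mu h : Z.
Hypothesis hmu : 2 <= mu.
Hypothesis hh : 2 <= h.

Let g := h * (h - 1) * mu.
Let n := h * (h - 1) * mu + 1.
Let Astar := fun x : Z => 0 <= x /\ (x mod n = mu \/ x mod n = h * mu).

Lemma modulus_bounds : 2 <= g /\ n = g + 1 /\ h * mu < n.
Proof. unfold g, n; nia. Qed.

Lemma Astar_shift (q y : Z) : 0 <= q -> Astar y -> Astar (y + n * q).
Proof.
  pose proof modulus_bounds.
  intros Hq [Hy Hmod]; split; [nia|].
  rewrite (Z.mul_comm n q), Z.mod_add by lia; exact Hmod.
Qed.

Lemma Astar_mu : Astar mu.
Proof. pose proof modulus_bounds; split; [lia | left; apply Z.mod_small; nia]. Qed.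

Lemma Astar_hmu : Astar (h * mu).
Proof. pose proof modulus_bounds; split; [nia | right; apply Z.mod_small; nia]. Qed.

Lemma Astar_ge_mu (x : Z) : Astar x -> mu <= x.
Proof.
  pose proof modulus_bounds.
  intros [Hx Hmod]; assert (x mod n <= x) by (apply Z.mod_le; lia).
  destruct Hmod; nia.
Qed.

Lemma Astar_combination (i j Q : Z) :
  0 <= i -> 0 <= j -> 1 <= i + j -> 0 <= Q ->
  sumset Astar (Z.to_nat (i + j)) (i * mu + j * (h * mu) + n * Q).
Proof.
  intros Hi Hj Hij HQ.
  replace (Z.to_nat (i + j)) with (S (Z.to_nat (i + j) - 1)) by lia.
  apply sumset_shift; [intros y Hy; now apply Astar_shift|].
  replace (S (Z.to_nat (i + j) - 1)) with (Z.to_nat i + Z.to_nat j)%nat by lia.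
  rewrite <- (Z2Nat.id i) at 2 by lia; rewrite <- (Z2Nat.id j) at 2 by lia.
  apply sumset_add; apply sumset_repeat; [apply Astar_mu | apply Astar_hmu].
Qed.

Lemma Astar_basis : basis_of_order Astar (Z.to_nat g).
Proof.
  destruct modulus_bounds as [Hg [Hn Hhmu]].
  exists (g * h * mu); intros x Hx.
  set (J := (h * (g * mu - x)) mod n).
  set (qq := (h * (g * mu - x)) / n).
  assert (HJ : h * (g * mu - x) = n * qq + J) by (apply Z.div_mod; lia).
  assert (HJb : 0 <= J < n) by (apply Z.mod_pos_bound; lia).
  set (Q := x - g * mu + qq * (h - 1) * mu).
  assert (HQ : x = (g - J) * mu + J * (h * mu) + n * Q).
  { assert (J = h * (g * mu - x) - n * qq) as -> by lia.
    unfold Q; rewrite Hn; unfold g; ring. }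
  assert (HQ0 : 0 <= Q).
  { assert (HJg : J * ((h - 1) * mu) <= g * ((h - 1) * mu))
      by (apply Z.mul_le_mono_nonneg_r; [apply Z.mul_nonneg_nonneg|]; lia).
    assert (HnQ : n * Q = x - g * mu - J * ((h - 1) * mu)) by (rewrite HQ at 1; ring).
    assert (g * mu + g * ((h - 1) * mu) = g * h * mu) by ring.
    apply (Z.mul_nonneg_cancel_l n); lia. }
  replace (Z.to_nat g) with (Z.to_nat ((g - J) + J)) by (f_equal; ring).
  rewrite HQ; apply Astar_combination; lia.
Qed.

Lemma Astar_sumset_residue (k : nat) (x : Z) : sumset Astar k x ->
  exists j q, 0 <= j <= Z.of_nat k /\ x = mu * (Z.of_nat k + j * (h - 1)) + n * q.
Proof.
  pose proof modulus_bounds.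
  revert x; induction k as [|k IH]; intros x Hx.
  - simpl in Hx; exists 0, 0; simpl; lia.
  - destruct Hx as [a [b [[Ha0 Ha] [Hb ->]]]].
    destruct (IH b Hb) as [j [q [Hj ->]]].
    assert (Hdiv : a = n * (a / n) + a mod n) by (apply Z.div_mod; lia).
    rewrite Nat2Z.inj_succ.
    destruct Ha as [Ha | Ha]; rewrite Ha in Hdiv.
    + exists j, (a / n + q); split; [lia | rewrite Hdiv at 1; ring].
    + exists (j + 1), (a / n + q); split; [lia | rewrite Hdiv at 1; ring].
Qed.

Lemma modulus_divides_cancel (t : Z) : (n | (h - 1) * mu * t) -> (n | t).
Proof.
  destruct modulus_bounds as [_ [Hn _]].
  intros Hdiv.
  assert (Hgt : (n | g * t)).
  { replace (g * t) with (h * ((h - 1) * mu * t)) by (unfold g; ring).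
    now apply Z.divide_mul_r. }
  replace t with (n * t - g * t) by lia.
  apply Z.divide_sub_r; [apply Z.divide_factor_l | exact Hgt].
Qed.

(* For 1 <= k < g, the residue mu (k - (h - 1)) is missed by k A*, so A* is
   not a basis of order k. *)
Lemma Astar_not_basis (k : nat) :
  (1 <= k)%nat -> (k < Z.to_nat g)%nat -> ~ basis_of_order Astar k.
Proof.
  destruct modulus_bounds as [Hg [Hn _]].
  intros Hk1 Hkg [N HN].
  set (M := Z.abs N + mu * h).
  set (x := mu * (Z.of_nat k - (h - 1)) + n * M).
  assert (HxN : N <= x) by (unfold x, M; nia).
  destruct (Astar_sumset_residue k x (HN x HxN)) as [j [q [Hj Hx]]].
  assert (Hdiv : (n | j + 1)).
  { apply modulus_divides_cancel; exists (M - q); unfold x in Hx; lia. }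
  apply Z.divide_pos_le in Hdiv; lia.
Qed.

Lemma A_basis :
  basis_of_order (fun x => Astar x \/ In x [0; 1]) (Z.to_nat (2 * h + mu - 4)).
Proof.
  destruct modulus_bounds as [Hg [Hn Hhmu]].
  set (A := fun x => Astar x \/ In x [0; 1]).
  assert (Hpad : forall c i j Q, 0 <= c -> 0 <= i -> 0 <= j -> 1 <= i + j ->
            c + i + j <= 2 * h + mu - 4 -> 0 <= Q ->
            sumset A (Z.to_nat (2 * h + mu - 4)) (c + (i * mu + j * (h * mu) + n * Q))).
  { intros c i j Q Hc Hi Hj Hij Hm HQ.
    apply (sumset_pad A c (Z.to_nat (i + j))); try (right; simpl; tauto); try lia.
    apply (sumset_mono Astar); [intros y Hy; now left|].
    now apply Astar_combination. }
  exists (2 * n); intros x Hx.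
  set (r := x mod n); set (X1 := x / n).
  assert (Hr : x = n * X1 + r) by (apply Z.div_mod; lia).
  assert (Hrb : 0 <= r < n) by (apply Z.mod_pos_bound; lia).
  assert (HX1 : 2 <= X1) by nia.
  set (c := r mod mu); set (t := r / mu).
  assert (Hrt : r = mu * t + c) by (apply Z.div_mod; lia).
  assert (Hcb : 0 <= c < mu) by (apply Z.mod_pos_bound; lia).
  set (i := t mod h); set (j := t / h).
  assert (Hti : t = h * j + i) by (apply Z.div_mod; lia).
  assert (Hib : 0 <= i < h) by (apply Z.mod_pos_bound; lia).
  assert (Ht : 0 <= t <= h * (h - 1)) by (unfold g in Hn; nia).
  assert (Hj : 0 <= j <= h - 1) by nia.
  assert (Hij : i + j <= 2 * h - 3) by nia.
  destruct (Z_le_gt_dec 1 t) as [Ht1 | Ht0].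
  -
    replace x with (c + (i * mu + j * (h * mu) + n * X1)) by lia.
    apply Hpad; nia.
  - (* r = c < mu: borrow one n = 1 + (h - 1)(h mu) *)
    assert (Hrc : r = c) by nia.
    destruct (Z_le_gt_dec (c + h) (2 * h + mu - 4)) as [Hfit | Hbig].
    + replace x with ((c + 1) + (0 * mu + (h - 1) * (h * mu) + n * (X1 - 1)))
        by (rewrite Hr, Hrc, Hn; unfold g; ring).
      apply Hpad; lia.
    + assert (h = 2 /\ c = mu - 1) as [-> Hc] by lia.
      replace x with (0 + (1 * mu + 1 * (2 * mu) + n * (X1 - 1)))
        by (rewrite Hr, Hrc, Hn, Hc; unfold g; ring).
      apply Hpad; lia.
Qed.

End Construction.

Theorem mainTheorem8 (mu h : Z) (hmu : 2 <= mu) (hh : 2 <= h) :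
  let X := [0; 1] in
  let n := h * (h - 1) * mu + 1 in
  let Astar := fun x : Z => 0 <= x /\ (x mod n = mu \/ x mod n = h * mu) in
  let A := fun x : Z => Astar x \/ In x X in
  mu_eq A X mu /\
  (forall x, Astar x <-> setminus A X x) /\
  order_eq (setminus A X) (Z.to_nat (h * (h - 1) * mu)) /\
  order_le A (Z.to_nat (2 * h + mu - 4)).
Proof.
  intros X n Astar A.
  pose proof (Astar_ge_mu mu h hmu hh) as Hge.
  assert (Hdiam : forall y, mu <= y -> diam y X = y) by (intros y Hy; unfold diam; simpl; lia).
  assert (Hstar : forall x, Astar x <-> setminus A X x).
  { intros x; split.
    - intros Hx; split; [now left | specialize (Hge x Hx); simpl; lia].
    - intros [[Hx | Hx] Hnot]; [exact Hx | contradiction]. }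
  assert (Hnonneg : forall x, Astar x -> 0 <= x) by (intros x Hx; apply Hx).
  split; [|split; [exact Hstar | split]].
  - split.
    + exists mu; pose proof (Astar_mu mu h hmu hh).
      repeat split; [now left | simpl; lia | now apply Hdiam].
    + intros y [Hy | Hy] Hnot; [rewrite Hdiam; auto | contradiction].
  - replace (setminus A X) with Astar
      by (apply functional_extensionality; intros x;
          apply propositional_extensionality; apply Hstar).
    pose proof (Astar_basis mu h hmu hh) as Hb.
    repeat split; [now apply nonneg_finitely_many_negatives | | nia | exact Hb |].
    + exists (Z.to_nat (h * (h - 1) * mu)); split; [nia | exact Hb].
    + intros k Hk1 Hkg; now apply (Astar_not_basis mu h).
  - apply order_le_of_basis; [| lia | now apply A_basis].
    apply nonneg_finitely_many_negatives.
    intros x [Hx | Hx]; [apply Hx | simpl in Hx; lia].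
Qed.
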